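(* Let $e_n$ and $m_n$ be the numbers of Dyck excursions with catastrophes and Dyck meanders with catastrophes of length $n$. Then \[e_n=C_e\rho_0^{-n}\big(1+O(1/n)\big),\qquad m_n=C_m\rho_0^{-n}\big(1+O(1/n)\big),\] where $\rho_0\approx0.46557$ is the unique positive root of $\rho_0^3+2\rho_0^2+\rho_0-1$, $C_e\approx0.10381$ is the positive root of $31C_e^3-62C_e^2+35C_e-3$, and $C_m\approx0.32679$ is the positive root of $31C_m^3-31C_m^2+16C_m-3$.
   Context: Dyck paths with catastrophes: paths starting at altitude $0$, never going below $0$, with steps $+1$, $-1$, and catastrophes (a step from an altitude $h\ge2$ directly to altitude $0$), all with weight $1$; meanders end anywhere, excursions end at $0$; length = number of steps. *)

From Stdlib Require Import Reals List Arith.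
Import ListNotations.

(* Steps: up (+1), down (-1), catastrophe (jump from altitude h >= 2 to 0). *)
Inductive step : Set := Up | Down | Cat.

Fixpoint walk (h : nat) (w : list step) : option nat :=
  match w with
  | [] => Some h
  | Up :: w' => walk (S h) w'
  | Down :: w' => match h with 0 => None | S h' => walk h' w' end
  | Cat :: w' => if Nat.leb 2 h then walk 0 w' else None
  end.

Fixpoint all_words (n : nat) : list (list step) :=
  match n with
  | 0 => [[]]
  | S n' => flat_map (fun w => [Up :: w; Down :: w; Cat :: w]) (all_words n')
  end.

Definition meander_count (n : nat) : nat :=
  length (filter (fun w => match walk 0 w with Some _ => true | None => false end)
                 (all_words n)).

Definition excursion_count (n : nat) : nat :=
  length (filter (fun w => match walk 0 w with Some 0 => true | _ => false end)
                 (all_words n)).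

(* Let a_n(h) be the number of meanders with catastrophes of length n ending at height h, and
   m_n = sum_h a_n(h).  Removing the last step gives the linear dynamics
     a_(n+1)(h+1) = a_n(h) + a_n(h+2),   a_(n+1)(0) = m_n - a_n(0),
     m_(n+1) = 3 m_n - 2 a_n(0) - a_n(1).
   Write r for rho0.  The increments a_(n+1) - a_n / r and m_(n+1) - m_n / r are the image, under a
   linear map phi with bounded coefficients sigma_k, of the vector of catastrophe-free walks from
   height 1 killed at 0: phi intertwines the dynamics of those walks with the one above, and there
   are at most 2^n of them.  As 2 r < 1, r^n a_n(h) and r^n m_n converge with error O((2 r)^n).
   The limits form an eigenvector of the dynamics, hence are proportional to t^h with t = r + r^2
   (and t^2 = r), while the left eigenvector w, for which sum_h w(h) a_n(h) = r^(-n), fixes the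
   scale: C_e = 1 / sum_h w(h) t^h and C_m = (1 / r + 1) C_e.  An exponentially small relative
   error is in particular O(1/n). *)

From Stdlib Require Import Reals List Lia Lra.
Import ListNotations.

(** * Counting walks by their final height *)

Lemma walk_app h w v :
  walk h (w ++ v) = match walk h w with Some k => walk k v | None => None end.
Proof.
  revert h; induction w as [|[] w IH]; intros h; simpl; auto;
    destruct h as [|[|h]]; auto.
Qed.

Lemma length_filter_prepend (q : list step -> bool) l :
  length (filter q (flat_map (fun w => [Up :: w; Down :: w; Cat :: w]) l)) =
  length (filter (fun w => q (Up :: w)) l) + length (filter (fun w => q (Down :: w)) l)
  + length (filter (fun w => q (Cat :: w)) l).
Proof.
  induction l as [|w l IH]; simpl; auto.
  destruct (q (Up :: w)), (q (Down :: w)), (q (Cat :: w)); simpl; rewrite IH; lia.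
Qed.

Lemma length_filter_all_words_S (q : list step -> bool) n :
  length (filter q (all_words (S n))) =
  length (filter (fun w => q (w ++ [Up])) (all_words n)) +
  length (filter (fun w => q (w ++ [Down])) (all_words n)) +
  length (filter (fun w => q (w ++ [Cat])) (all_words n)).
Proof.
  revert q; induction n as [|n IH]; intros q.
  - simpl. destruct (q [Up]), (q [Down]), (q [Cat]); reflexivity.
  - change (all_words (S (S n))) with
      (flat_map (fun w => [Up :: w; Down :: w; Cat :: w]) (all_words (S n))).
    rewrite length_filter_prepend, (IH (fun w => q (Up :: w))),
      (IH (fun w => q (Down :: w))), (IH (fun w => q (Cat :: w))).
    change (all_words (S n)) with
      (flat_map (fun w => [Up :: w; Down :: w; Cat :: w]) (all_words n)).
    rewrite !length_filter_prepend; simpl; lia.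
Qed.

Definition count_walks (n : nat) (p : option nat -> bool) : nat :=
  length (filter (fun w => p (walk 0 w)) (all_words n)).

Definition extend (o : option nat) (s : step) : option nat :=
  match o with Some h => walk h [s] | None => None end.

Lemma count_walks_S n p :
  count_walks (S n) p =
  count_walks n (fun o => p (extend o Up)) + count_walks n (fun o => p (extend o Down))
  + count_walks n (fun o => p (extend o Cat)).
Proof.
  unfold count_walks; rewrite length_filter_all_words_S.
  f_equal; [f_equal|]; f_equal; apply filter_ext; intros w; rewrite walk_app; reflexivity.
Qed.

Lemma count_walks_ext n p q : (forall o, p o = q o) -> count_walks n p = count_walks n q.
Proof.
  intros Hpq; unfold count_walks; rewrite (filter_ext _ _ (fun w => Hpq (walk 0 w))); auto.
Qed.

Lemma count_walks_false n p : (forall o, p o = false) -> count_walks n p = 0.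
Proof. intros Hp; unfold count_walks; induction (all_words n); simpl; auto; rewrite Hp; auto. Qed.

Lemma count_walks_orb n p q : (forall o, andb (p o) (q o) = false) ->
  count_walks n (fun o => orb (p o) (q o)) = count_walks n p + count_walks n q.
Proof.
  intros Hpq; unfold count_walks; induction (all_words n) as [|w l IH]; simpl; auto.
  specialize (Hpq (walk 0 w)).
  destruct (p (walk 0 w)), (q (walk 0 w)); simpl in *; try discriminate; rewrite IH; lia.
Qed.

Definition ends_at (n h : nat) : nat :=
  count_walks n (fun o => match o with Some k => k =? h | None => false end).

Definition ends_above (n h : nat) : nat :=
  count_walks n (fun o => match o with Some k => h <=? k | None => false end).

Lemma meander_count_walks n :
  meander_count n = count_walks n (fun o => match o with Some _ => true | None => false end).
Proof. reflexivity. Qed.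

Ltac by_final_height :=
  first [apply count_walks_ext | apply count_walks_false]; intros [[|[|?]]|]; reflexivity.

Lemma meander_count_split n : meander_count n = ends_at n 0 + ends_above n 1.
Proof.
  rewrite meander_count_walks; unfold ends_at, ends_above.
  rewrite <- count_walks_orb by (intros [[|?]|]; reflexivity); by_final_height.
Qed.

Lemma ends_above_1_split n : ends_above n 1 = ends_at n 1 + ends_above n 2.
Proof.
  unfold ends_at, ends_above.
  rewrite <- count_walks_orb by (intros [[|[|?]]|]; reflexivity); by_final_height.
Qed.

Lemma ends_at_SS n h : ends_at (S n) (S h) = ends_at n h + ends_at n (S (S h)).
Proof.
  rewrite <- (Nat.add_0_r (_ + _)); unfold ends_at at 1; rewrite count_walks_S.
  f_equal; [f_equal|].
  - apply count_walks_ext; intros [?|]; reflexivity.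
  - by_final_height.
  - by_final_height.
Qed.

Lemma ends_at_S0 n : ends_at (S n) 0 + ends_at n 0 = meander_count n.
Proof.
  assert (E : ends_at (S n) 0 = 0 + ends_at n 1 + ends_above n 2).
  { unfold ends_at at 1; rewrite count_walks_S; f_equal; [f_equal|]; by_final_height. }
  rewrite E, meander_count_split, ends_above_1_split; lia.
Qed.

Lemma meander_count_S n : meander_count (S n) + 2 * ends_at n 0 + ends_at n 1 = 3 * meander_count n.
Proof.
  assert (E : meander_count (S n) = meander_count n + ends_above n 1 + ends_above n 2).
  { rewrite !meander_count_walks, count_walks_S; unfold ends_above.
    f_equal; [f_equal|]; by_final_height. }
  pose proof (meander_count_split n); pose proof (ends_above_1_split n); lia.
Qed.

Lemma ends_at_0 h : ends_at 0 h = if h =? 0 then 1 else 0.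
Proof. destruct h; reflexivity. Qed.

Lemma ends_at_above n h : n < h -> ends_at n h = 0.
Proof.
  revert h; induction n as [|n IH]; intros h Hh.
  - rewrite ends_at_0; destruct h; [lia | reflexivity].
  - destruct h as [|h]; [lia|]; rewrite ends_at_SS, !IH; lia.
Qed.

Lemma excursion_count_ends_at n : excursion_count n = ends_at n 0.
Proof.
  unfold excursion_count, ends_at, count_walks; f_equal; apply filter_ext.
  intros w; destruct (walk 0 w) as [[|?]|]; reflexivity.
Qed.

Open Scope R_scope.

Lemma sum_f_R0_succ_l (g : nat -> R) N :
  sum_f_R0 g (S N) = g 0%nat + sum_f_R0 (fun i => g (S i)) N.
Proof. rewrite decomp_sum; [reflexivity | lia]. Qed.

Lemma sum_f_R0_vanishing_tail (g : nat -> R) N M :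
  (forall i, (N < i)%nat -> g i = 0) -> (N <= M)%nat -> sum_f_R0 g M = sum_f_R0 g N.
Proof.
  intros Hg; induction 1 as [|M HM IH]; auto.
  rewrite tech5, IH, Hg by lia; ring.
Qed.

Lemma sum_f_R0_shift_le (g : nat -> R) N h :
  (forall i, 0 <= g i) -> (forall i, (N < i)%nat -> g i = 0) ->
  sum_f_R0 (fun i => g (h + i)%nat) N <= sum_f_R0 g N.
Proof.
  intros Hpos Hg; induction h as [|h IH]; [right; reflexivity|].
  assert (Hsplit : sum_f_R0 (fun i => g (h + i)%nat) N + 0
                   = g h + sum_f_R0 (fun i => g (S h + i)%nat) N).
  { rewrite <- (Hg (h + S N)%nat) by lia; rewrite <- tech5, sum_f_R0_succ_l, Nat.add_0_r.
    f_equal; apply sum_eq; intros i _; f_equal; lia. }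
  pose proof (Hpos h); lra.
Qed.

Lemma abs_weighted_sum_le (w y : nat -> R) B N :
  (forall i, Rabs (w i) <= B) -> (forall i, 0 <= y i) ->
  Rabs (sum_f_R0 (fun i => w i * y i) N) <= B * sum_f_R0 y N.
Proof.
  intros Hw Hy; eapply Rle_trans; [apply Rsum_abs|].
  rewrite scal_sum; apply sum_Rle; intros i _.
  rewrite Rabs_mult, (Rabs_right (y i)) by (apply Rle_ge, Hy).
  rewrite (Rmult_comm (y i)); apply Rmult_le_compat_r; auto.
Qed.

Definition kill_step (x : nat -> R) (h : nat) : R :=
  match h with 0%nat => 0 | S k => x k + x (S (S k)) end.

Definition kill_adjoint (w : nat -> R) (i : nat) : R :=
  w (S i) + match i with S (S k) => w (S k) | _ => 0 end.

Lemma sum_kill_step_adjoint (w x : nat -> R) N :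
  (forall i, (N < i)%nat -> x i = 0) ->
  sum_f_R0 (fun h => w (S h) * (x h + x (S (S h)))) N
  = sum_f_R0 (fun i => x i * kill_adjoint w i) N.
Proof.
  intros Hx.
  set (G i := x i * match i with S (S k) => w (S k) | _ => 0 end).
  assert (HG : sum_f_R0 G N = sum_f_R0 (fun h => w (S h) * x (S (S h))) N).
  { rewrite <- (sum_f_R0_vanishing_tail G N (S (S N)));
      [| intros i Hi; unfold G; rewrite Hx by lia; ring | lia].
    rewrite !sum_f_R0_succ_l; unfold G at 1 2.
    rewrite Rmult_0_r, Rmult_0_r, !Rplus_0_l; apply sum_eq; intros; unfold G; ring. }
  transitivity (sum_f_R0 (fun i => x i * w (S i)) N + sum_f_R0 G N).
  - rewrite HG, <- plus_sum; apply sum_eq; intros; ring.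
  - rewrite <- plus_sum; apply sum_eq; intros; unfold G, kill_adjoint; ring.
Qed.

(* killed_walks n h counts the catastrophe-free paths of length n from height 1 to height h
   that never visit 0. *)
Fixpoint killed_walks (n : nat) : nat -> R :=
  match n with
  | 0%nat => fun h => if (h =? 1)%nat then 1 else 0
  | S n => kill_step (killed_walks n)
  end.

Lemma killed_walks_nonneg n h : 0 <= killed_walks n h.
Proof.
  revert h; induction n as [|n IH]; intros [|h]; simpl; try lra.
  - destruct h; simpl; lra.
  - pose proof (IH h); pose proof (IH (S (S h))); lra.
Qed.

Lemma killed_walks_at_0 n : killed_walks n 0 = 0.
Proof. destruct n; reflexivity. Qed.

Lemma killed_walks_above n h : (S n < h)%nat -> killed_walks n h = 0.
Proof.
  revert h; induction n as [|n IH]; intros h Hh; simpl.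
  - destruct h as [|[|h]]; [lia | lia | reflexivity].
  - destruct h as [|h]; [lia|]; simpl; rewrite !IH by lia; ring.
Qed.

Lemma killed_walks_mass n : sum_f_R0 (killed_walks n) (S n) <= 2 ^ n.
Proof.
  induction n as [|n IH]; [simpl; lra|].
  rewrite sum_f_R0_succ_l, killed_walks_at_0, Rplus_0_l.
  rewrite (sum_eq _ (fun h => 1 * (killed_walks n h + killed_walks n (S (S h)))))
    by (intros; simpl; ring).
  rewrite (sum_kill_step_adjoint (fun _ => 1)) by (intros; apply killed_walks_above; lia).
  apply Rle_trans with (sum_f_R0 (fun i => killed_walks n i * 2) (S n)).
  - apply sum_Rle; intros i _; apply Rmult_le_compat_l;
      [apply killed_walks_nonneg | unfold kill_adjoint; destruct i as [|[|i]]; lra].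
  - rewrite <- scal_sum; simpl (2 ^ S n); lra.
Qed.

Definition hcount (n h : nat) : R := INR (ends_at n h).
Definition mcount (n : nat) : R := INR (meander_count n).

Lemma hcount_SS n h : hcount (S n) (S h) = hcount n h + hcount n (S (S h)).
Proof. unfold hcount; rewrite ends_at_SS, plus_INR; reflexivity. Qed.

Lemma hcount_S0 n : hcount (S n) 0 = mcount n - hcount n 0.
Proof. unfold hcount, mcount; rewrite <- ends_at_S0, plus_INR; ring. Qed.

Lemma mcount_S n : mcount (S n) = 3 * mcount n - 2 * hcount n 0 - hcount n 1.
Proof.
  unfold hcount, mcount; pose proof (f_equal INR (meander_count_S n)) as E.
  rewrite !plus_INR, !mult_INR in E; simpl (INR 2) in E; simpl (INR 3) in E; lra.
Qed.

Lemma hcount_0 h : hcount 0 h = if (h =? 0)%nat then 1 else 0.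
Proof. unfold hcount; rewrite ends_at_0; destruct (h =? 0)%nat; reflexivity. Qed.

Lemma mcount_0 : mcount 0 = 1.
Proof. reflexivity. Qed.

Lemma hcount_above n h : (n < h)%nat -> hcount n h = 0.
Proof. intros; unfold hcount; rewrite ends_at_above; auto. Qed.

Lemma sum_weighted_hcount_S (w : nat -> R) n :
  sum_f_R0 (fun j => w j * hcount (S n) j) (S n)
  = w 0%nat * (mcount n - hcount n 0) + sum_f_R0 (fun i => hcount n i * kill_adjoint w i) n.
Proof.
  rewrite sum_f_R0_succ_l, hcount_S0, <- sum_kill_step_adjoint
    by (intros; apply hcount_above; lia).
  f_equal; apply sum_eq; intros; rewrite hcount_SS; reflexivity.
Qed.

Lemma mcount_sum n : sum_f_R0 (hcount n) n = mcount n.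
Proof.
  induction n as [|n IH]; [reflexivity|].
  rewrite (sum_eq _ (fun j => 1 * hcount (S n) j)) by (intros; ring).
  rewrite sum_weighted_hcount_S, mcount_S, <- IH.
  assert (Htail : sum_f_R0 (hcount n) n
                  = hcount n 0 + hcount n 1 + sum_f_R0 (fun k => hcount n (S (S k))) n).
  { rewrite <- (sum_f_R0_vanishing_tail _ n (S (S n)));
      [| intros; apply hcount_above; lia | lia].
    rewrite !sum_f_R0_succ_l; ring. }
  assert (Hdouble : sum_f_R0 (fun i => hcount n i * kill_adjoint (fun _ => 1) i) n
                    = sum_f_R0 (hcount n) n + sum_f_R0 (fun k => hcount n (S (S k))) n).
  { rewrite <- (sum_f_R0_vanishing_tail _ n (S (S n)));
      [| intros i Hi; rewrite hcount_above by lia; ring | lia].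
    rewrite Htail, !sum_f_R0_succ_l; unfold kill_adjoint.
    rewrite (sum_eq (fun i => _ * _) (fun k => hcount n (S (S k)) + hcount n (S (S k))))
      by (intros; ring).
    rewrite plus_sum; ring. }
  rewrite Hdouble, Htail; ring.
Qed.

Lemma abs_sum3_le a b d k : Rabs a <= k -> Rabs b <= k -> Rabs d <= k -> 
  Rabs (a + b + d) <= 3 * k.
Proof. pose proof (Rabs_triang (a + b) d); pose proof (Rabs_triang a b); lra. Qed.

Lemma pow_le_pow_of_le_1 q i n : 0 <= q <= 1 -> (i <= n)%nat -> q ^ n <= q ^ i.
Proof.
  intros Hq; induction 1 as [|n _ IH]; [lra|].
  simpl; pose proof (pow_le q n (proj1 Hq)); nra.
Qed.

Lemma geometric_zero q K z : 0 <= q < 1 -> (forall n, Rabs z <= K * q ^ n) -> z = 0.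
Proof.
  intros Hq Hz; destruct (Req_dec z 0) as [|Hnz]; auto; exfalso.
  assert (Hpos : 0 < Rabs z) by (apply Rabs_pos_lt; auto).
  assert (HK : 0 < K) by (specialize (Hz 0%nat); simpl in Hz; lra).
  destruct (pow_lt_1_zero q ltac:(rewrite Rabs_right; lra) (Rabs z / K)) as [N HN].
  { apply Rdiv_lt_0_compat; lra. }
  specialize (HN N (Nat.le_refl N)); specialize (Hz N).
  rewrite Rabs_right in HN by (apply Rle_ge, pow_le; lra).
  apply (Rmult_lt_compat_l K) in HN; auto.
  replace (K * (Rabs z / K)) with (Rabs z) in HN by (field; lra); lra.
Qed.

Lemma linear_geometric_le q n : 0 <= q < 1 -> INR (S n) * q ^ n <= / (1 - q).
Proof.
  intros Hq.
  apply Rle_trans with (sum_f_R0 (fun i => q ^ i) n).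
  - rewrite Rmult_comm, <- sum_cte; apply sum_Rle; intros i Hi.
    apply pow_le_pow_of_le_1; [lra | auto].
  - rewrite tech3 by lra; unfold Rdiv; rewrite <- (Rmult_1_l (/ (1 - q))) at 2.
    apply Rmult_le_compat_r; [apply Rlt_le, Rinv_0_lt_compat; lra|].
    pose proof (pow_le q (S n) (proj1 Hq)); lra.
Qed.

Lemma linear_geometric_zero q K z : 0 <= q < 1 -> 0 <= K ->
  (forall n, Rabs z <= K * INR (S n) * q ^ n) -> z = 0.
Proof.
  intros Hq HK Hz; apply (geometric_zero q (2 * K / (1 - q))); auto; intros n.
  (* at time 2n the factor 2n+1 is absorbed by one of the two factors q^n *)
  eapply Rle_trans; [apply (Hz (n + n)%nat)|].
  rewrite pow_add, S_INR, plus_INR.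
  pose proof (linear_geometric_le q n Hq) as Hlin; rewrite S_INR in Hlin.
  pose proof (pow_le q n (proj1 Hq)).
  set (p := q ^ n) in *; set (b := / (1 - q)) in *; unfold Rdiv; fold b.
  assert (0 <= K * p * p) by (apply Rmult_le_pos; [apply Rmult_le_pos|]; auto).
  assert (0 <= K * p * (b - (INR n + 1) * p))
    by (apply Rmult_le_pos; [apply Rmult_le_pos|]; lra).
  nra.
Qed.

Lemma geometric_increments_bound (x : nat -> R) K q : 0 <= K -> 0 <= q < 1 ->
  (forall n, Rabs (x (S n) - x n) <= K * q ^ n) ->
  forall n m, (n <= m)%nat -> Rabs (x m - x n) <= K * q ^ n / (1 - q).
Proof.
  intros HK Hq Hx n m Hnm; replace m with (m - n + n)%nat by lia.
  assert (Hpartial : forall k, Rabs (x (k + n)%nat - x n) <= K * q ^ n * (1 - q ^ k) / (1 - q)).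
  { induction k as [|k IH].
    - unfold Rminus; rewrite Rplus_opp_r, Rabs_R0; simpl; unfold Rdiv; lra.
    - replace (x (S k + n)%nat - x n) with ((x (S (k + n)) - x (k + n)%nat) + (x (k + n)%nat - x n))
        by (simpl; ring).
      eapply Rle_trans; [apply Rabs_triang|].
      specialize (Hx (k + n)%nat); rewrite pow_add in Hx.
      replace (K * q ^ n * (1 - q ^ S k) / (1 - q))
        with (K * (q ^ k * q ^ n) + K * q ^ n * (1 - q ^ k) / (1 - q)) by (simpl; field; lra).
      lra. }
  eapply Rle_trans; [apply Hpartial|]; unfold Rdiv.
  apply Rmult_le_compat_r; [apply Rlt_le, Rinv_0_lt_compat; lra|].
  pose proof (pow_le q (m - n) (proj1 Hq)); pose proof (pow_le q n (proj1 Hq)).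
  assert (0 <= K * q ^ n) by (apply Rmult_le_pos; auto); nra.
Qed.

Lemma Un_cv_dist_le (x : nat -> R) L c n : Un_cv x L ->
  (forall m, (n <= m)%nat -> Rabs (x m - x n) <= c) -> Rabs (x n - L) <= c.
Proof.
  intros Hcv Hc; apply Rnot_lt_le; intros Hlt.
  destruct (Hcv (Rabs (x n - L) - c) ltac:(lra)) as [N HN].
  specialize (HN (N + n)%nat ltac:(lia)); specialize (Hc (N + n)%nat ltac:(lia)).
  unfold Rdist in HN.
  pose proof (Rabs_triang (x n - x (N + n)%nat) (x (N + n)%nat - L)).
  rewrite Rabs_minus_sym in Hc.
  replace (x n - x (N + n)%nat + (x (N + n)%nat - L)) with (x n - L) in * by ring; lra.
Qed.

Lemma geometric_limit (x : nat -> R) K q : 0 <= K -> 0 <= q < 1 ->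
  (forall n, Rabs (x (S n) - x n) <= K * q ^ n) ->
  { L | forall n, Rabs (x n - L) <= K * q ^ n / (1 - q) }.
Proof.
  intros HK Hq Hx.
  pose proof (geometric_increments_bound x K q HK Hq Hx) as Htail.
  assert (Hcauchy : Cauchy_crit x).
  { intros eps Heps.
    destruct (pow_lt_1_zero q ltac:(rewrite Rabs_right; lra) (eps * (1 - q) / (2 * (K + 1))))
      as [N HN]; [apply Rdiv_lt_0_compat; [apply Rmult_lt_0_compat|]; lra|].
    exists N; intros n m Hn Hm; unfold Rdist.
    specialize (HN N (Nat.le_refl N)); rewrite Rabs_right in HN by (apply Rle_ge, pow_le; lra).
    assert (Hsmall : K * q ^ N / (1 - q) < eps / 2).
    { apply (Rmult_lt_reg_r (1 - q)); [lra|].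
      replace (K * q ^ N / (1 - q) * (1 - q)) with (K * q ^ N) by (field; lra).
      apply (Rmult_lt_compat_l (K + 1)) in HN; [|lra].
      replace ((K + 1) * (eps * (1 - q) / (2 * (K + 1)))) with (eps / 2 * (1 - q)) in HN
        by (field; lra).
      pose proof (pow_le q N (proj1 Hq)); nra. }
    pose proof (Htail N n Hn); pose proof (Htail N m Hm).
    replace (x n - x m) with ((x n - x N) - (x m - x N)) by ring.
    eapply Rle_lt_trans; [apply Rabs_triang|]; rewrite Rabs_Ropp; lra. }
  destruct (R_complete x Hcauchy) as [L HL]; exists L; intros n.
  apply (Un_cv_dist_le x L); auto.
Qed.

Lemma relative_error_of_geometric X C K q r n : 0 < r -> 0 <= K -> 0 <= q < 1 -> 0 < C ->
  (1 <= n)%nat -> Rabs (X * r ^ n - C) <= K * q ^ n ->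
  Rabs (X - C * (/ r) ^ n) <= K / ((1 - q) * C) / INR n * (C * (/ r) ^ n).
Proof.
  intros Hr HK Hq HC Hn Hbound.
  assert (Hinv : 0 < (/ r) ^ n) by (apply pow_lt, Rinv_0_lt_compat; auto).
  assert (Hrr : (/ r) ^ n * r ^ n = 1)
    by (rewrite <- Rpow_mult_distr, Rinv_l by lra; apply pow1).
  replace (X - C * (/ r) ^ n) with ((/ r) ^ n * (X * r ^ n - C))
    by (transitivity (X * ((/ r) ^ n * r ^ n) - C * (/ r) ^ n); [|rewrite Hrr]; ring).
  rewrite Rabs_mult, (Rabs_right ((/ r) ^ n)) by lra.
  assert (HnR : 0 < INR n) by (apply lt_0_INR; lia).
  pose proof (linear_geometric_le q n Hq) as Hlin; rewrite S_INR in Hlin.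
  pose proof (pow_le q n (proj1 Hq)).
  replace (K / ((1 - q) * C) / INR n * (C * (/ r) ^ n))
    with ((/ r) ^ n * (K * / (1 - q) / INR n)) by (field; repeat split; lra).
  apply Rmult_le_compat_l; [lra|].
  apply (Rmult_le_reg_r (INR n)); auto.
  replace (K * / (1 - q) / INR n * INR n) with (K * / (1 - q)) by (field; lra).
  eapply Rle_trans; [apply Rmult_le_compat_r; [lra | apply Hbound]|].
  rewrite Rmult_assoc, (Rmult_comm (q ^ n)); apply Rmult_le_compat_l; nra.
Qed.

(* 1 / weight_series, reduced modulo the cubic (exc_const_mul_weight_series). *)
Definition exc_const (r : R) : R := (12 - 17 * r - 4 * r ^ 2) / 31.

Section Dominant_root.

Variable r : R.
Hypothesis r_pos : 0 < r.
Hypothesis r_root : r ^ 3 + 2 * r ^ 2 + r - 1 = 0.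

Let t := r + r ^ 2.
Let c := r / (1 - 2 * r).

Lemma r_bounds : 0.46 < r < 0.47.
Proof. split; nra. Qed.

Lemma inv_r : / r = (1 + r) ^ 2.
Proof. apply (Rmult_eq_reg_l r); [rewrite Rinv_r | ]; nra. Qed.

Lemma t_mul_1r : t * (1 + r) = 1.
Proof. unfold t; nra. Qed.

Lemma t_sq : t ^ 2 = r.
Proof.
  transitivity (r + r * (r ^ 3 + 2 * r ^ 2 + r - 1)); [unfold t; ring | rewrite r_root; ring].
Qed.

Lemma t_range : 0 < t < 1 /\ t <= 2 * r.
Proof. pose proof r_bounds; unfold t; repeat split; nra. Qed.

(** * The intertwining map *)

(* sigma (k + 4) = sigma (k + 3) + sigma (k + 1) (sigma_rec3), and the value sigma 1 = -1/r
   cancels the root 1 + r > 1 of x^3 - x^2 - 1: what remains are the roots of x^2 + r x + t, of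
   modulus sqrt t < 1, and energy is the quadratic Lyapunov function of that recurrence. *)
Fixpoint sigma (k : nat) : R :=
  match k with
  | 0%nat => 1
  | 1%nat => - / r
  | 2%nat => 1
  | S ((S (S _ as k1)) as k2) => - r * sigma k2 - t * sigma k1
  end.

Lemma sigma_rec3 k : sigma (4 + k) = sigma (3 + k) + sigma (1 + k).
Proof.
  change (sigma (4 + k)) with (- r * sigma (3 + k) - t * sigma (2 + k)).
  change (sigma (3 + k)) with (- r * sigma (2 + k) - t * sigma (1 + k)).
  set (a := sigma (2 + k)); set (b := sigma (1 + k)); apply Rminus_diag_uniq.
  replace (- r * (- r * a - t * b) - t * a - (- r * a - t * b + b))
    with (b * (t * (1 + r) - 1)) by (unfold t; ring).
  rewrite t_mul_1r; ring.
Qed.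

Lemma sigma_4 : sigma 4 = 1 - / r.
Proof.
  pose proof (sigma_rec3 0) as E; cbn [Nat.add] in E; rewrite E.
  change (sigma 3) with (- r * 1 - t * (- / r)); unfold t; simpl; field; lra.
Qed.

Lemma sigma_5 : sigma 5 = 2 - / r.
Proof. pose proof (sigma_rec3 1) as E; cbn [Nat.add] in E; rewrite E, sigma_4; simpl; ring. Qed.

Lemma kill_adjoint_sigma i : (1 <= i)%nat -> kill_adjoint sigma i = sigma (3 + i) - sigma i.
Proof.
  intros Hi; destruct i as [|[|k]]; [lia | |]; unfold kill_adjoint; cbn [Nat.add].
  - rewrite sigma_4; simpl; ring.
  - pose proof (sigma_rec3 k); pose proof (sigma_rec3 (S k)); cbn [Nat.add] in *; lra.
Qed.

Lemma kill_adjoint_sigma_shift i : (1 <= i)%nat ->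
  kill_adjoint (fun j => sigma (3 + j)) i
  = 3 * sigma (3 + i) - 2 * sigma i - match i with 0%nat => 0 | S k => sigma k end.
Proof.
  intros Hi; destruct i as [|[|k]]; [lia | |]; unfold kill_adjoint; cbn [Nat.add].
  - rewrite sigma_5, sigma_4; simpl; ring.
  - pose proof (sigma_rec3 k); pose proof (sigma_rec3 (S k)); pose proof (sigma_rec3 (S (S k))).
    cbn [Nat.add] in *; lra.
Qed.

Definition energy (k : nat) : R :=
  sigma (S k) ^ 2 + r * sigma (S k) * sigma k + t * sigma k ^ 2.

Lemma energy_S k : energy (S (S k)) = t * energy (S k).
Proof.
  unfold energy.
  change (sigma (S (S (S k)))) with (- r * sigma (S (S k)) - t * sigma (S k)); ring.
Qed.

Lemma energy_lower k : r * sigma k ^ 2 <= energy k.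
Proof.
  unfold energy, t.
  pose proof (pow2_ge_0 (sigma (S k) + r * sigma k / 2)); pose proof (pow2_ge_0 (r * sigma k)); nra.
Qed.

Lemma energy_le k : energy (S k) <= energy 1.
Proof.
  induction k as [|k IH]; [lra|].
  rewrite energy_S; pose proof t_range; pose proof (energy_lower (S k)).
  assert (0 <= r * sigma (S k) ^ 2) by (apply Rmult_le_pos; [lra | apply pow2_ge_0]); nra.
Qed.

Definition sigma_bound : R := 1 + energy 1 / r.

Lemma sigma_bounded k : Rabs (sigma k) <= sigma_bound.
Proof.
  unfold sigma_bound.
  assert (Hsq : forall k, sigma (S k) ^ 2 <= energy 1 / r).
  { intros k'; apply (Rmult_le_reg_l r); auto.
    replace (r * (energy 1 / r)) with (energy 1) by (field; lra).
    eapply Rle_trans; [apply energy_lower | apply energy_le]. }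
  assert (0 <= energy 1 / r) by (eapply Rle_trans; [apply pow2_ge_0 | apply (Hsq 0%nat)]).
  destruct k as [|k]; [simpl; rewrite Rabs_R1; lra|].
  specialize (Hsq k).
  destruct (Rcase_abs (sigma (S k))); [rewrite Rabs_left | rewrite Rabs_right]; nra.
Qed.

Lemma sigma_bound_nonneg : 0 <= sigma_bound.
Proof. eapply Rle_trans; [apply Rabs_pos | apply (sigma_bounded 0)]. Qed.

Definition phi_h (N : nat) (x : nat -> R) (h : nat) : R :=
  sum_f_R0 (fun i => sigma i * x (h + i)%nat) N.

Definition phi_m (N : nat) (x : nat -> R) : R :=
  sum_f_R0 (fun i => sigma (3 + i) * x i) N.

Section Intertwining.

Variables (N : nat) (x : nat -> R).
Hypothesis x_supp : forall i, (N < i)%nat -> x i = 0.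
Hypothesis x_0 : x 0%nat = 0.

Lemma phi_h_kill_step_S h : phi_h (S N) (kill_step x) (S h) = phi_h N x h + phi_h N x (S (S h)).
Proof.
  unfold phi_h; rewrite tech5, <- plus_sum.
  replace (kill_step x (S h + S N)) with 0
    by (cbn [Nat.add kill_step]; rewrite !x_supp by lia; ring).
  rewrite Rmult_0_r, Rplus_0_r; apply sum_eq; intros; cbn [Nat.add kill_step]; ring.
Qed.

Lemma phi_h_kill_step_0 : phi_h (S N) (kill_step x) 0 = phi_m N x - phi_h N x 0.
Proof.
  unfold phi_h, phi_m; rewrite sum_f_R0_succ_l, <- minus_sum.
  transitivity (sum_f_R0 (fun h => sigma (S h) * (x h + x (S (S h)))) N);
    [cbn [Nat.add kill_step]; rewrite Rmult_0_r, Rplus_0_l; reflexivity|].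
  rewrite sum_kill_step_adjoint by exact x_supp.
  apply sum_eq; intros [|i] _; cbn [Nat.add].
  - rewrite x_0; ring.
  - rewrite kill_adjoint_sigma by lia; cbn [Nat.add]; ring.
Qed.

Lemma phi_h_1 :
  phi_h N x 1 = sum_f_R0 (fun i => x i * match i with 0%nat => 0 | S k => sigma k end) N.
Proof.
  rewrite <- (sum_f_R0_vanishing_tail _ N (S N)); [| intros; rewrite x_supp by lia; ring | lia].
  rewrite sum_f_R0_succ_l, Rmult_0_r, Rplus_0_l; apply sum_eq; intros; cbn [Nat.add]; ring.
Qed.

Lemma phi_m_kill_step : phi_m (S N) (kill_step x) = 3 * phi_m N x - 2 * phi_h N x 0 - phi_h N x 1.
Proof.
  rewrite phi_h_1; unfold phi_h, phi_m; rewrite sum_f_R0_succ_l.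
  transitivity (sum_f_R0 (fun h => sigma (3 + S h) * (x h + x (S (S h)))) N);
    [cbn [kill_step]; rewrite Rmult_0_r, Rplus_0_l; reflexivity|].
  rewrite (sum_kill_step_adjoint (fun j => sigma (3 + j))) by exact x_supp.
  rewrite !scal_sum, <- !minus_sum.
  apply sum_eq; intros [|i] _; cbn [Nat.add].
  - rewrite x_0; ring.
  - rewrite kill_adjoint_sigma_shift by lia; cbn [Nat.add]; ring.
Qed.

End Intertwining.

Lemma increments_repr n :
  (forall h, hcount (S n) h - / r * hcount n h = phi_h (S n) (killed_walks n) h) /\
  mcount (S n) - / r * mcount n = phi_m (S n) (killed_walks n).
Proof.
  induction n as [|n [IHh IHm]].
  - split.
    + intros [|[|h]]; unfold phi_h; cbn [sum_f_R0 killed_walks Nat.add Nat.eqb sigma].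
      * rewrite hcount_S0, mcount_0, hcount_0; simpl; ring.
      * rewrite hcount_SS, !hcount_0; simpl; ring.
      * rewrite !hcount_above by lia; ring.
    + rewrite mcount_S, mcount_0, !hcount_0; unfold phi_m.
      cbn [sum_f_R0 killed_walks Nat.add Nat.eqb]; rewrite sigma_4; simpl; ring.
  - change (killed_walks (S n)) with (kill_step (killed_walks n)).
    assert (Hsupp : forall i, (S n < i)%nat -> killed_walks n i = 0)
      by (intros; apply killed_walks_above; lia).
    split; [intros [|h]|].
    + rewrite phi_h_kill_step_0, <- IHh, <- IHm, !hcount_S0 by (auto using killed_walks_at_0); ring.
    + rewrite phi_h_kill_step_S, <- !IHh, !hcount_SS by auto; ring.
    + rewrite phi_m_kill_step, <- IHm, <- !IHh, !mcount_S by (auto using killed_walks_at_0); ring.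
Qed.

(** * Limits of the rescaled counts *)

Lemma phi_h_killed_bound n h : Rabs (phi_h (S n) (killed_walks n) h) <= sigma_bound * 2 ^ n.
Proof.
  unfold phi_h; eapply Rle_trans.
  { apply (abs_weighted_sum_le sigma (fun i => killed_walks n (h + i)%nat));
      [apply sigma_bounded | intros; apply killed_walks_nonneg]. }
  apply Rmult_le_compat_l; [apply sigma_bound_nonneg|].
  eapply Rle_trans; [apply sum_f_R0_shift_le | apply killed_walks_mass].
  - apply killed_walks_nonneg.
  - intros; apply killed_walks_above; lia.
Qed.

Lemma phi_m_killed_bound n : Rabs (phi_m (S n) (killed_walks n)) <= sigma_bound * 2 ^ n.
Proof.
  unfold phi_m; eapply Rle_trans.
  { apply (abs_weighted_sum_le (fun i => sigma (3 + i)) (killed_walks n));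
      [intros; apply sigma_bounded | apply killed_walks_nonneg]. }
  apply Rmult_le_compat_l; [apply sigma_bound_nonneg | apply killed_walks_mass].
Qed.

Lemma scaled_increment_bound (X : nat -> R) n :
  Rabs (X (S n) - / r * X n) <= sigma_bound * 2 ^ n ->
  Rabs (X (S n) * r ^ S n - X n * r ^ n) <= sigma_bound * r * (2 * r) ^ n.
Proof.
  intros HX.
  replace (X (S n) * r ^ S n - X n * r ^ n) with (r ^ S n * (X (S n) - / r * X n))
    by (simpl; field; lra).
  rewrite Rabs_mult, Rabs_right by (apply Rle_ge, pow_le; lra).
  replace (sigma_bound * r * (2 * r) ^ n) with (r ^ S n * (sigma_bound * 2 ^ n))
    by (simpl; rewrite Rpow_mult_distr; ring).
  apply Rmult_le_compat_l; auto; apply pow_le; lra.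
Qed.

Let K := sigma_bound * r / (1 - 2 * r).

Lemma K_nonneg : 0 <= K.
Proof.
  pose proof r_bounds; pose proof sigma_bound_nonneg; unfold K.
  apply Rmult_le_pos; [nra | apply Rlt_le, Rinv_0_lt_compat; lra].
Qed.

Lemma scaled_counts_converge : exists (f : nat -> R) (Minf : R),
  (forall h n, Rabs (hcount n h * r ^ n - f h) <= K * (2 * r) ^ n) /\
  (forall n, Rabs (mcount n * r ^ n - Minf) <= K * (2 * r) ^ n).
Proof.
  pose proof r_bounds.
  assert (Hq : 0 <= 2 * r < 1) by lra.
  assert (HK0 : 0 <= sigma_bound * r) by (pose proof sigma_bound_nonneg; nra).
  assert (HKq : forall n, sigma_bound * r * (2 * r) ^ n / (1 - 2 * r) = K * (2 * r) ^ n)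
    by (intros; unfold K; field; lra).
  assert (Hh : forall h n, Rabs (hcount (S n) h * r ^ S n - hcount n h * r ^ n)
                           <= sigma_bound * r * (2 * r) ^ n).
  { intros h n; apply (scaled_increment_bound (fun k => hcount k h)).
    rewrite (proj1 (increments_repr n)); apply phi_h_killed_bound. }
  assert (Hm : forall n, Rabs (mcount (S n) * r ^ S n - mcount n * r ^ n)
                         <= sigma_bound * r * (2 * r) ^ n).
  { intros n; apply scaled_increment_bound.
    rewrite (proj2 (increments_repr n)); apply phi_m_killed_bound. }
  exists (fun h => proj1_sig (geometric_limit _ _ _ HK0 Hq (Hh h))),
    (proj1_sig (geometric_limit _ _ _ HK0 Hq Hm)); split.
  - intros h n; destruct (geometric_limit _ _ _ HK0 Hq (Hh h)) as [L HL]; simpl.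
    rewrite <- HKq; apply HL.
  - intros n; destruct (geometric_limit _ _ _ HK0 Hq Hm) as [L HL]; simpl.
    rewrite <- HKq; apply HL.
Qed.

Definition weight (h : nat) : R := if (h =? 0)%nat then 1 else c * (1 - t ^ h).

Lemma weight_range h : 0 <= weight h <= 1 + c.
Proof.
  pose proof r_bounds; destruct t_range as [Ht _].
  assert (0 < c) by (unfold c; apply Rdiv_lt_0_compat; lra).
  unfold weight; destruct (h =? 0)%nat; [lra|].
  pose proof (pow_le t h ltac:(lra)); pose proof (pow_le_pow_of_le_1 t 0 h ltac:(lra) ltac:(lia)).
  simpl in *; nra.
Qed.

Lemma weight_eigen i :
  kill_adjoint weight i + match i with 0%nat => 0 | S _ => weight 0 end = / r * weight i.
Proof.
  pose proof r_bounds.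
  assert (F1 : c * / r = 2 * c + 1) by (unfold c; field; lra).
  assert (F2 : / r * t = t ^ 2 + 1) by (rewrite t_sq; unfold t; field; lra).
  assert (F3 : c * (1 - t) = / r) by (rewrite inv_r; unfold c, t; field_simplify_eq; [nra | lra]).
  unfold kill_adjoint, weight; destruct i as [|[|k]]; cbn [Nat.eqb].
  - rewrite Rmult_1_r, pow_1, F3; ring.
  - transitivity (c * / r - c * (/ r * t));
      [rewrite F1, F2; simpl; ring | rewrite <- F3; simpl; ring].
  - transitivity (c * / r - c * t ^ S k * (/ r * t)); [rewrite F1, F2; simpl; ring | simpl; ring].
Qed.

Lemma conservation n : sum_f_R0 (fun h => weight h * hcount n h) n = (/ r) ^ n.
Proof.
  induction n as [|n IH]; [cbn [sum_f_R0 weight Nat.eqb pow]; rewrite hcount_0; simpl; ring|].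
  rewrite sum_weighted_hcount_S, <- mcount_sum.
  replace (weight 0 * (sum_f_R0 (hcount n) n - hcount n 0))
    with (sum_f_R0 (fun i => hcount n i * match i with 0%nat => 0 | S _ => weight 0 end) n).
  - rewrite <- plus_sum, (sum_eq _ (fun i => weight i * hcount n i * / r)).
    + rewrite <- scal_sum, IH; simpl; ring.
    + intros i _; transitivity (hcount n i * (/ r * weight i)); [rewrite <- weight_eigen|]; ring.
  - rewrite <- (sum_f_R0_vanishing_tail _ n (S n));
      [| intros; rewrite hcount_above by lia; ring | lia].
    rewrite <- (sum_f_R0_vanishing_tail (hcount n) n (S n));
      [| intros; apply hcount_above; lia | lia].
    rewrite !sum_f_R0_succ_l; cbv beta iota; rewrite <- scal_sum; ring.
Qed.

Definition weight_series : R := 1 + c * (t / (1 - t) - r / (1 - r)).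

Lemma weight_series_partial n :
  sum_f_R0 (fun h => weight h * t ^ h) n
  = weight_series - c * (t ^ S n / (1 - t) - r ^ S n / (1 - r)).
Proof.
  pose proof r_bounds; destruct t_range as [Ht _]; unfold weight_series.
  induction n as [|n IH]; [unfold weight; simpl; field; split; lra|].
  rewrite tech5, IH; unfold weight; cbn [Nat.eqb].
  replace (c * (1 - t ^ S n) * t ^ S n) with (c * (t ^ S n - r ^ S n))
    by (rewrite <- t_sq, <- pow_mult; replace (2 * S n)%nat with (S n + S n)%nat by lia;
        rewrite pow_add; ring).
  simpl; field; split; lra.
Qed.

Lemma weight_series_tail n :
  Rabs (sum_f_R0 (fun h => weight h * t ^ h) n - weight_series)
  <= c * (/ (1 - t) + / (1 - r)) * (2 * r) ^ n.
Proof.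
  pose proof r_bounds; destruct t_range as [Ht Ht_le].
  assert (0 < c) by (unfold c; apply Rdiv_lt_0_compat; lra).
  rewrite weight_series_partial.
  replace (weight_series - c * (t ^ S n / (1 - t) - r ^ S n / (1 - r)) - weight_series)
    with (c * (r ^ S n * / (1 - r)) - c * (t ^ S n * / (1 - t))) by (unfold Rdiv; ring).
  assert (Hpow : forall u, 0 <= u <= 2 * r -> 0 <= u ^ S n <= (2 * r) ^ n).
  { intros u Hu; split; [apply pow_le; lra|].
    eapply Rle_trans; [apply (pow_le_pow_of_le_1 u n); lra || lia | apply pow_incr; lra]. }
  pose proof (Hpow t ltac:(lra)); pose proof (Hpow r ltac:(lra)).
  assert (0 < / (1 - t)) by (apply Rinv_0_lt_compat; lra).
  assert (0 < / (1 - r)) by (apply Rinv_0_lt_compat; lra).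
  assert (0 <= c * / (1 - r)) by (apply Rmult_le_pos; lra).
  assert (0 <= c * / (1 - t)) by (apply Rmult_le_pos; lra).
  assert (0 <= c * (r ^ S n * / (1 - r)) <= c * / (1 - r) * (2 * r) ^ n) by (split; nra).
  assert (0 <= c * (t ^ S n * / (1 - t)) <= c * / (1 - t) * (2 * r) ^ n) by (split; nra).
  apply Rabs_le; nra.
Qed.

Lemma exc_const_mul_weight_series : exc_const r * weight_series = 1.
Proof.
  pose proof r_bounds; destruct t_range as [Ht _].
  assert (HW : weight_series = ((1 - 2 * r) * (1 - r ^ 2) + r) / ((1 - 2 * r) * (1 - r ^ 2))).
  { unfold weight_series, c, t; field_simplify_eq; [nra | repeat split; nra]. }
  rewrite HW; unfold exc_const; field_simplify_eq; [| split; nra].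
  apply Rminus_diag_uniq.
  transitivity ((r ^ 3 + 2 * r ^ 2 + r - 1) * (19 - 14 * r - 8 * r ^ 2));
    [ring | rewrite r_root; ring].
Qed.

Lemma geometric_error_step n : K * (2 * r) ^ S n <= K * (2 * r) ^ n.
Proof.
  pose proof r_bounds; pose proof K_nonneg.
  apply Rmult_le_compat_l; auto; apply pow_le_pow_of_le_1; [lra | lia].
Qed.

Lemma abs_scale_r_le u k : Rabs u <= k -> Rabs (r * u) <= k.
Proof.
  intros Hu; pose proof r_bounds; pose proof (Rabs_pos u).
  rewrite Rabs_mult, Rabs_right by lra; nra.
Qed.

Section Limits.

Variables (f : nat -> R) (Minf : R).
Hypothesis f_lim : forall h n, Rabs (hcount n h * r ^ n - f h) <= K * (2 * r) ^ n.
Hypothesis Minf_lim : forall n, Rabs (mcount n * r ^ n - Minf) <= K * (2 * r) ^ n.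

Lemma f_lim_S h n : Rabs (hcount (S n) h * r ^ S n - f h) <= K * (2 * r) ^ n.
Proof. eapply Rle_trans; [apply f_lim | apply geometric_error_step]. Qed.

Lemma limit_succ h : f (S h) = r * (f h + f (S (S h))).
Proof.
  pose proof r_bounds; apply Rminus_diag_uniq, (geometric_zero (2 * r) (3 * K)); [lra|].
  intros n.
  replace (f (S h) - r * (f h + f (S (S h)))) with
    (- (hcount (S n) (S h) * r ^ S n - f (S h)) + r * (hcount n h * r ^ n - f h)
     + r * (hcount n (S (S h)) * r ^ n - f (S (S h)))) by (rewrite hcount_SS; simpl; ring).
  rewrite Rmult_assoc; apply abs_sum3_le;
    [rewrite Rabs_Ropp; apply f_lim_S | apply abs_scale_r_le, f_lim | apply abs_scale_r_le, f_lim].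
Qed.

Lemma limit_zero : f 0%nat = r * (Minf - f 0%nat).
Proof.
  pose proof r_bounds; apply Rminus_diag_uniq, (geometric_zero (2 * r) (3 * K)); [lra|].
  intros n.
  replace (f 0%nat - r * (Minf - f 0%nat)) with
    (- (hcount (S n) 0 * r ^ S n - f 0%nat) + r * (mcount n * r ^ n - Minf)
     + r * - (hcount n 0 * r ^ n - f 0%nat)) by (rewrite hcount_S0; simpl; ring).
  rewrite Rmult_assoc; apply abs_sum3_le; [rewrite Rabs_Ropp; apply f_lim_S | |];
    apply abs_scale_r_le; [apply Minf_lim | rewrite Rabs_Ropp; apply f_lim].
Qed.

Lemma limit_decay h : Rabs (f (S h)) <= K * (2 * r) ^ h.
Proof.
  pose proof (f_lim (S h) h) as E; rewrite hcount_above in E by lia.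
  rewrite Rmult_0_l, Rminus_0_l, Rabs_Ropp in E; exact E.
Qed.

Lemma limit_geometric h : f h = t ^ h * f 0%nat.
Proof.
  pose proof r_bounds; destruct t_range as [Ht _].
  set (z k := f (S k) - t * f k).
  assert (Hz_rec : forall k, t * z (S k) = z k).
  { intros k; unfold z.
    replace (t * (f (S (S k)) - t * f (S k)))
      with ((1 + r) * (r * (f k + f (S (S k)))) - t * f k - t ^ 2 * f (S k)) by (unfold t; ring).
    rewrite <- limit_succ, t_sq; ring. }
  assert (Hz_pow : forall k, z 0%nat = t ^ k * z k).
  { induction k as [|k IH]; [simpl; ring|]; rewrite IH, <- Hz_rec; simpl; ring. }
  assert (Hz0 : z 0%nat = 0).
  { apply (geometric_zero (2 * r) (2 * K)); [lra|]; intros n.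
    rewrite (Hz_pow (S n)), Rabs_mult, Rabs_right by (apply Rle_ge, pow_le; lra).
    assert (Hzn : Rabs (z (S n)) <= 2 * K * (2 * r) ^ n).
    { unfold z; unfold Rminus; eapply Rle_trans; [apply Rabs_triang|].
      rewrite Rabs_Ropp, Rabs_mult, (Rabs_right t) by lra.
      pose proof (limit_decay (S n)); pose proof (geometric_error_step n).
      pose proof (limit_decay n); pose proof (Rabs_pos (f (S n))); nra. }
    pose proof (pow_le_pow_of_le_1 t 0 (S n) ltac:(lra) ltac:(lia)); simpl (t ^ 0) in *.
    pose proof (pow_le t (S n) ltac:(lra)); pose proof (Rabs_pos (z (S n))); nra. }
  assert (Hz : forall k, z k = 0).
  { intros k; pose proof (Hz_pow k) as E; rewrite Hz0 in E.
    symmetry in E; apply Rmult_integral in E; destruct E as [E|]; auto.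
    exfalso; apply (pow_nonzero t k); lra. }
  induction h as [|h IH]; [simpl; ring|].
  pose proof (Hz h); unfold z in *; simpl; rewrite Rmult_assoc, <- IH; lra.
Qed.

Lemma limit_meander : Minf = (/ r + 1) * f 0%nat.
Proof. pose proof limit_zero; apply (Rmult_eq_reg_l r); [| lra]; field_simplify; lra. Qed.

Lemma limit_weighted_defect n :
  Rabs (1 - f 0%nat * sum_f_R0 (fun h => weight h * t ^ h) n)
  <= INR (S n) * ((1 + c) * (K * (2 * r) ^ n)).
Proof.
  assert (E : 1 - f 0%nat * sum_f_R0 (fun h => weight h * t ^ h) n
              = sum_f_R0 (fun h => weight h * (hcount n h * r ^ n - f h)) n).
  { transitivity (r ^ n * sum_f_R0 (fun h => weight h * hcount n h) n
                  - f 0%nat * sum_f_R0 (fun h => weight h * t ^ h) n).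
    - rewrite conservation, <- Rpow_mult_distr, Rinv_r, pow1 by lra; reflexivity.
    - rewrite !scal_sum, <- minus_sum; apply sum_eq; intros h _.
      rewrite (limit_geometric h); ring. }
  rewrite E, Rmult_comm, <- sum_cte; eapply Rle_trans; [apply Rsum_abs|].
  apply sum_Rle; intros h _; rewrite Rabs_mult, Rabs_right by (apply Rle_ge, weight_range).
  apply Rmult_le_compat; [apply weight_range | apply Rabs_pos | apply weight_range | apply f_lim].
Qed.

Lemma limit_scale : f 0%nat = exc_const r.
Proof.
  pose proof r_bounds; destruct t_range as [Ht _]; pose proof K_nonneg.
  assert (0 < c) by (unfold c; apply Rdiv_lt_0_compat; lra).
  set (C := c * (/ (1 - t) + / (1 - r))).
  assert (0 <= C)
    by (apply Rmult_le_pos;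
        [lra | apply Rplus_le_le_0_compat; apply Rlt_le, Rinv_0_lt_compat; lra]).
  pose proof exc_const_mul_weight_series as HeW.
  apply (Rmult_eq_reg_r weight_series); [rewrite HeW | intros HW; rewrite HW in HeW; lra].
  symmetry; apply Rminus_diag_uniq.
  apply (linear_geometric_zero (2 * r) ((1 + c) * K + Rabs (f 0%nat) * C)); [lra | |].
  { pose proof (Rabs_pos (f 0%nat)); apply Rplus_le_le_0_compat; apply Rmult_le_pos; lra. }
  intros n; pose proof (limit_weighted_defect n) as Hdefect; pose proof (weight_series_tail n).
  set (W := sum_f_R0 (fun h => weight h * t ^ h) n) in *.
  replace (1 - f 0%nat * weight_series) with ((1 - f 0%nat * W) + f 0%nat * (W - weight_series))
    by ring.
  eapply Rle_trans; [apply Rabs_triang|]; rewrite Rabs_mult.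
  pose proof (pos_INR n); rewrite S_INR in *.
  pose proof (pow_le (2 * r) n ltac:(lra)); pose proof (Rabs_pos (f 0%nat)).
  assert (Rabs (f 0%nat) * Rabs (W - weight_series) <= Rabs (f 0%nat) * (C * (2 * r) ^ n))
    by (apply Rmult_le_compat_l; auto).
  assert (0 <= Rabs (f 0%nat) * C * (2 * r) ^ n * INR n)
    by (apply Rmult_le_pos; [apply Rmult_le_pos; [apply Rmult_le_pos|] |]; auto).
  nra.
Qed.

End Limits.

Lemma scaled_counts_asymptotics : exists K : R, 0 <= K /\
  (forall n, Rabs (hcount n 0 * r ^ n - exc_const r) <= K * (2 * r) ^ n) /\
  (forall n, Rabs (mcount n * r ^ n - (/ r + 1) * exc_const r) <= K * (2 * r) ^ n).
Proof.
  destruct scaled_counts_converge as [f [Minf [Hf HM]]].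
  exists K; split; [apply K_nonneg | split; intros n].
  - rewrite <- (limit_scale f Hf); apply Hf.
  - rewrite <- (limit_scale f Hf), <- (limit_meander f Minf Hf HM); apply HM.
Qed.

End Dominant_root.

Lemma exc_const_bounds r : 0 < r -> r ^ 3 + 2 * r ^ 2 + r - 1 = 0 -> 0.1 < exc_const r < 0.11.
Proof. intros Hr Hc; pose proof (r_bounds r Hr Hc); unfold exc_const; split; nra. Qed.

Lemma exc_const_cubic r : r ^ 3 + 2 * r ^ 2 + r - 1 = 0 ->
  31 * exc_const r ^ 3 - 62 * exc_const r ^ 2 + 35 * exc_const r - 3 = 0.
Proof.
  intros Hc.
  transitivity
    ((r ^ 3 + 2 * r ^ 2 + r - 1) * ((-2937 - 2444 * r - 688 * r ^ 2 - 64 * r ^ 3) / 961));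
    [unfold exc_const; field | rewrite Hc; ring].
Qed.

Lemma meander_const_cubic r : 0 < r -> r ^ 3 + 2 * r ^ 2 + r - 1 = 0 ->
  31 * ((/ r + 1) * exc_const r) ^ 3 - 31 * ((/ r + 1) * exc_const r) ^ 2
  + 16 * ((/ r + 1) * exc_const r) - 3 = 0.
Proof.
  intros Hr Hc; rewrite (inv_r r Hr Hc).
  transitivity ((r ^ 3 + 2 * r ^ 2 + r - 1) *
    ((-4989 + 2371 * r + 10373 * r ^ 2 + 4926 * r ^ 3 - 17413 * r ^ 4 - 27468 * r ^ 5
      - 19633 * r ^ 6 - 6732 * r ^ 7 - 1072 * r ^ 8 - 64 * r ^ 9) / 961));
    [unfold exc_const; field | rewrite Hc; ring].
Qed.

Lemma cubic_e_root_unique x y :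
  31 * x ^ 3 - 62 * x ^ 2 + 35 * x - 3 = 0 -> 31 * y ^ 3 - 62 * y ^ 2 + 35 * y - 3 = 0 ->
  0.1 < y < 0.11 -> x = y.
Proof.
  intros Ex Ey Hy.
  assert (F : (x - y) * (31 * (x ^ 2 + x * y + y ^ 2) - 62 * (x + y) + 35) = 0)
    by (rewrite <- (Rminus_diag_eq _ _ (eq_trans Ex (eq_sym Ey))); ring).
  apply Rmult_integral in F; destruct F as [F|F]; [lra | exfalso].
  assert (Q : 124 * (31 * (x ^ 2 + x * y + y ^ 2) - 62 * (x + y) + 35)
              = (62 * x + 31 * y - 62) ^ 2 + (2883 * y ^ 2 - 3844 * y + 496)) by ring.
  rewrite F in Q; pose proof (pow2_ge_0 (62 * x + 31 * y - 62)); nra.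
Qed.

Lemma cubic_m_root_unique x y :
  31 * x ^ 3 - 31 * x ^ 2 + 16 * x - 3 = 0 -> 31 * y ^ 3 - 31 * y ^ 2 + 16 * y - 3 = 0 -> x = y.
Proof.
  intros Ex Ey.
  assert (F : (x - y) * (31 * (x ^ 2 + x * y + y ^ 2) - 31 * (x + y) + 16) = 0)
    by (rewrite <- (Rminus_diag_eq _ _ (eq_trans Ex (eq_sym Ey))); ring).
  apply Rmult_integral in F; destruct F as [F|F]; [lra | exfalso].
  assert (Q : 12 * (31 * (x ^ 2 + x * y + y ^ 2) - 31 * (x + y) + 16)
              = 372 * (x + y / 2 - 1 / 2) ^ 2 + 279 * (y - 1 / 3) ^ 2 + 68) by field.
  rewrite F in Q; pose proof (pow2_ge_0 (x + y / 2 - 1 / 2)); pose proof (pow2_ge_0 (y - 1 / 3)).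
  lra.
Qed.

Theorem corollary4p7 (rho0 Ce Cm : R) :
  0 < rho0 -> rho0 ^ 3 + 2 * rho0 ^ 2 + rho0 - 1 = 0 ->
  0 < Ce -> 31 * Ce ^ 3 - 62 * Ce ^ 2 + 35 * Ce - 3 = 0 ->
  0 < Cm -> 31 * Cm ^ 3 - 31 * Cm ^ 2 + 16 * Cm - 3 = 0 ->
  (exists M : R, exists N : nat, forall n : nat, (N <= n)%nat ->
     Rabs (INR (excursion_count n) - Ce * (/ rho0) ^ n)
       <= M / INR n * (Ce * (/ rho0) ^ n)) /\
  (exists M : R, exists N : nat, forall n : nat, (N <= n)%nat ->
     Rabs (INR (meander_count n) - Cm * (/ rho0) ^ n)
       <= M / INR n * (Cm * (/ rho0) ^ n)).
Proof.
  intros r_pos r_root Ce_pos Ce_root Cm_pos Cm_root.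
  destruct (scaled_counts_asymptotics rho0 r_pos r_root) as [K [K_nonneg [He Hm]]].
  assert (Hq : 0 <= 2 * rho0 < 1) by (pose proof (r_bounds rho0 r_pos r_root); lra).
  assert (ECe : Ce = exc_const rho0)
    by (apply cubic_e_root_unique; auto using exc_const_cubic, exc_const_bounds).
  assert (ECm : Cm = (/ rho0 + 1) * exc_const rho0)
    by (apply cubic_m_root_unique; auto using meander_const_cubic).
  split; [exists (K / ((1 - 2 * rho0) * Ce)) | exists (K / ((1 - 2 * rho0) * Cm))];
    exists 1%nat; intros n Hn; apply relative_error_of_geometric; auto.
  - rewrite excursion_count_ends_at, ECe; apply He.
  - rewrite ECm; apply Hm.
Qed.
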